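(* Let $G_n=(V_n,E)$ be a directed acyclic graph on $n$ vertices, let $H$ be a $2$-TC-spanner of $G_n$, and let $f:V_n\to\mathbb{R}$ be $\epsilon$-far from monotone. Then at least $\frac{\epsilon n}{2}$ edges $(x,y)$ of $H$ are violated by $f$, i.e. satisfy $f(x)>f(y)$.
   Context: For a digraph $G=(V,E)$, $TC(G)$ denotes its transitive closure (edge $(u,v)$ iff $v$ is reachable from $u$ by a directed path). A $k$-TC-spanner of $G$ is a digraph $H=(V,E_H)$ with $E_H\subseteq E(TC(G))$ such that $d_H(u,v)\le k$ whenever $v$ is reachable from $u$ in $G$. $f:V_n\to\mathbb{R}$ is monotone on $G_n$ if $f(x)\le f(y)$ for all $(x,y)\in E$, and $\epsilon$-far from monotone if $\min_{g\text{ monotone}}|\{x:f(x)\neq g(x)\}|\ge\epsilon n$. *)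

From HB Require Import structures.
From mathcomp Require Import all_boot all_order all_algebra.
Set Implicit Arguments. Unset Strict Implicit. Unset Printing Implicit Defensive.
Import Order.TTheory GRing.Theory Num.Theory.

Definition reachable (V : finType) (E : rel V) (u v : V) : bool :=
  [exists w, E u w && connect E w v].

Definition acyclic_digraph (V : finType) (E : rel V) : Prop :=
  forall x : V, ~~ reachable E x x.

Definition dist_le2 (V : finType) (H : rel V) (u v : V) : bool :=
  [|| u == v, H u v | [exists w, H u w && H w v]].

Definition TC_spanner2 (V : finType) (E H : rel V) : Prop :=
  (forall u v, H u v -> reachable E u v) /\
  (forall u v, reachable E u v -> dist_le2 H u v).

Definition monotone_on (V : finType) (R : realFieldType) (E : rel V)
  (f : V -> R) : Prop :=
  forall x y, E x y -> (f x <= f y)%R.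

Definition eps_far (V : finType) (R : realFieldType) (E : rel V)
  (f : V -> R) (eps : R) : Prop :=
  forall g : V -> R, monotone_on E g ->
    (eps * #|V|%:R <= #|[set x | f x != g x]|%:R)%R.

Definition num_violated (V : finType) (R : realFieldType) (H : rel V)
  (f : V -> R) : nat :=
  #|[set e : V * V | H e.1 e.2 && (f e.2 < f e.1)%R]|.

From HB Require Import structures.
From mathcomp Require Import all_boot all_order all_algebra.
Import Order.TTheory GRing.Theory Num.Theory.
Set Implicit Arguments. Unset Strict Implicit. Unset Printing Implicit Defensive.

(* Let S be the set of edges of H violated by f and C the set of
   endpoints of these edges, so #|C| <= 2 #|S|.  Every H-edge with an endpoint
   outside C is respected by f.  Since H is a 2-TC-spanner, any two vertices
   u, v outside C with v reachable from u are joined by an H-path of length at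
   most 2 whose endpoints lie outside C, hence f u <= f v: f is monotone for
   the reachability order on the complement D of C.  Such a partial monotone
   function extends to a monotone g on the whole graph (take g v to be the
   maximum of f over the points of D below v), and g differs from f only
   inside C.  Being eps-far, f then satisfies eps n <= #|C| <= 2 #|S|. *)

Definition endpoints (T : finType) (S : {set T * T}) : {set T} :=
  [set e.1 | e in S] :|: [set e.2 | e in S].

Lemma card_endpoints (T : finType) (S : {set T * T}) :
  (#|endpoints S| <= 2 * #|S|)%N.
Proof.
apply: leq_trans (leq_card_setU _ _) _.
by rewrite mul2n -addnn leq_add // leq_imset_card.
Qed.

Lemma mem_endpoints (T : finType) (S : {set T * T}) (e : T * T) :
  e \in S -> (e.1 \in endpoints S) && (e.2 \in endpoints S).
Proof. by move=> eS; rewrite !inE !imset_f ?orbT. Qed.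

Section MonotoneExtension.

Variables (V : finType) (E : rel V) (R : realFieldType).

Lemma connect_reachable (u v : V) :
  connect E u v -> u = v \/ reachable E u v.
Proof.
move/connectP=> [[|w p] Ep ->]; first by left.
right; apply/existsP; exists w; move: Ep => /= /andP[Euw Ep].
by rewrite Euw; apply/connectP; exists p.
Qed.

(* A function monotone for the reachability order on a vertex set D extends
   to a function monotone on the whole graph: take, at v, the maximum of f
   over the vertices of D from which v is reachable (or a lower bound of f
   if there are none). *)
Lemma monotone_extension (D : {set V}) (f : V -> R) :
  {in D &, forall u v, connect E u v -> f u <= f v}%R ->
  exists g : V -> R, monotone_on E g /\ {in D, g =1 f}.
Proof.
move=> monoD.
pose m := \big[Order.min/0%R]_u f u.
have m_le u : (m <= f u)%R by exact: bigmin_le.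
pose g v := \big[Order.max/m]_(u | (u \in D) && connect E u v) f u.
exists g; split.
  move=> x y Exy; apply: bigmax_le; first exact: bigmax_ge_id.
  move=> u /andP[uD ux]; apply: le_bigmax_cond.
  by rewrite uD (connect_trans ux (connect1 Exy)).
move=> v vD; apply/eqP; rewrite eq_le; apply/andP; split.
  by apply: bigmax_le => // u /andP[uD uv]; exact: monoD.
by apply: le_bigmax_cond; rewrite vD connect0.
Qed.

Lemma eps_far_outside (D : {set V}) (f g : V -> R) (eps : R) :
  eps_far E f eps -> monotone_on E g -> {in D, g =1 f} ->
  (eps * #|V|%:R <= #|~: D|%:R)%R.
Proof.
move=> far gmono gD; apply: le_trans (far g gmono) _; rewrite ler_nat.
apply: subset_leq_card; apply/subsetP=> x; rewrite !inE.
by apply: contraNN => xD; rewrite gD.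
Qed.

End MonotoneExtension.

Section SpannerCover.

Variables (V : finType) (E H : rel V) (R : realFieldType) (f : V -> R).

Definition violated_edges : {set V * V} :=
  [set e : V * V | H e.1 e.2 && (f e.2 < f e.1)%R].

Definition violation_cover : {set V} := endpoints violated_edges.

Lemma respected_off_cover (a b : V) :
  H a b -> (a \notin violation_cover) || (b \notin violation_cover) ->
  (f a <= f b)%R.
Proof.
move=> Hab; rewrite leNgt; apply: contraTN => ba.
have /mem_endpoints : (a, b) \in violated_edges by rewrite inE Hab ba.
by case/andP=> /= -> ->.
Qed.

Lemma monotone_off_cover :
  TC_spanner2 E H ->
  {in ~: violation_cover &, forall u v, connect E u v -> f u <= f v}%R.
Proof.
move=> [_ spans] u v; rewrite !in_setC => uC vC /connect_reachable [->|uv] //.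
case/or3P: (spans u v uv) => [/eqP ->|Huv|/existsP[w /andP[Huw Hwv]]] //.
  by apply: respected_off_cover; rewrite ?uC.
apply: (@le_trans _ _ (f w)); apply: respected_off_cover; rewrite ?uC ?vC //.
by rewrite orbT.
Qed.

End SpannerCover.

Theorem mainTheorem2 (R : realFieldType) (V : finType) (E H : rel V)
  (f : V -> R) (eps : R) :
  acyclic_digraph E -> TC_spanner2 E H -> eps_far E f eps ->
  (eps * #|V|%:R / 2%:R <= (num_violated H f)%:R)%R.
Proof.
move=> _ spanner far.
have [g [gmono gf]] := monotone_extension (monotone_off_cover (f := f) spanner).
have far_cover := eps_far_outside far gmono gf.
rewrite setCK in far_cover.
have cover_small : (#|violation_cover H f| <= 2 * num_violated H f)%N
  by exact: card_endpoints.
rewrite ler_pdivrMr ?ltr0n // -natrM mulnC.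
by apply: le_trans far_cover _; rewrite ler_nat.
Qed.
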